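(* Let $k$ be an integer and let $\mathbf{x}\in\mathcal{A}_k$, where $\mathbf{x}$ is a vertex of $P^n_{\mathrm{SEP}}$ (so $\mathbf{x}$ has $n$ nodes). Then $k+3\le n\le 2k$.
   Context: $K_n=(V_n,E_n)$ is the complete undirected graph on $n$ nodes; $\delta(S)$ is the set of edges with exactly one endpoint in $S\subseteq V_n$. $P^n_{\mathrm{SEP}}=\{\mathbf{x}\in\mathbb{R}^{E_n} : \sum_{e\in\delta(v)}x_e=2\ \forall v;\ \sum_{e\in\delta(S)}x_e\ge 2\ \forall S \text{ with } 3\le|S|\le n-3;\ 0\le x_e\le 1\}$. A vertex is an extreme point of $P^n_{\mathrm{SEP}}$; it is fractional if it is not integral. The support graph of $\mathbf{x}$ is $G_{\mathbf{x}}=(V_n,E_{\mathbf{x}})$ with $E_{\mathbf{x}}=\{e: x_e>0\}$. $\mathcal{F}_k$ is the set of all fractional vertices $\mathbf{x}$ of $P^n_{\mathrm{SEP}}$, over all $n$, with $|E_{\mathbf{x}}|=n+k$; $\mathcal{A}_k$ is the set of $\mathbf{x}\in\mathcal{F}_k$ whose support graph $G_{\mathbf{x}}$ has no node of degree $2$. *)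

From HB Require Import structures.
From mathcomp Require Import all_boot all_order all_algebra.
From mathcomp Require Import reals.
Set Implicit Arguments. Unset Strict Implicit. Unset Printing Implicit Defensive.
Import Order.TTheory GRing.Theory Num.Theory.
Local Open Scope ring_scope.

(* Edges of the complete graph K_n on node set 'I_n: 2-element subsets. *)
Definition edge (n : nat) := {e : {set 'I_n} | #|e| == 2%N}.

Definition in_cut n (S : {set 'I_n}) (e : edge n) : bool :=
  #|val e :&: S| == 1%N.

Definition in_SEP (R : realType) (n : nat) (x : edge n -> R) : Prop :=
  [/\ (forall v : 'I_n, \sum_(e : edge n | in_cut [set v] e) x e = 2),
      (forall S : {set 'I_n}, (3 <= #|S|)%N -> (#|S| <= n - 3)%N ->
          2 <= \sum_(e : edge n | in_cut S e) x e)
    & (forall e : edge n, 0 <= x e <= 1)].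

Definition SEP_vertex (R : realType) (n : nat) (x : edge n -> R) : Prop :=
  in_SEP x /\
  forall (y z : edge n -> R) (l : R),
    in_SEP y -> in_SEP z -> 0 < l -> l < 1 ->
    (forall e, x e = l * y e + (1 - l) * z e) -> y = z.

Definition fractional (R : realType) (n : nat) (x : edge n -> R) : Prop :=
  ~ (forall e : edge n, x e \is a Num.int).

Definition support (R : realType) (n : nat) (x : edge n -> R) : {set edge n} :=
  [set e | 0 < x e].

Definition supp_deg (R : realType) (n : nat) (x : edge n -> R) (v : 'I_n) : nat :=
  #|[set e in support x | v \in val e]|.

Definition in_F (R : realType) (k : int) (n : nat) (x : edge n -> R) : Prop :=
  [/\ SEP_vertex x, fractional x & (#|support x|%:Z = n%:Z + k)%R].

Definition in_A (R : realType) (k : int) (n : nat) (x : edge n -> R) : Prop :=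
  in_F k x /\ forall v : 'I_n, supp_deg x v != 2%N.

(* Upper bound: every node of G_x has degree at least 3, so 3n <= 2|E_x| = 2(n + k).
   Lower bound: a vertex of P^n_SEP (n >= 3) has |E_x| <= 2n - 3.  Fix a node r and a
   maximal laminar family L of tight sets S with r \notin S and 2 <= |S| <= n - 2; it has at
   most n - 3 members.  If |E_x| > 2n - 3, the n degree equations and the |L| cut equations
   have a nonzero solution d supported on E_x.  Uncrossing (for crossing tight S, T the sets
   S :&: T and S :|: T are tight and no x-weight joins S :\: T to T :\: S) propagates
   d(delta(S)) = 0 from L to every tight set, so x +- eps d stay in P^n_SEP, contradicting
   extremality. *)

From Pilot Require Import Defs.
From mathcomp Require Import all_boot all_order all_algebra.
From mathcomp Require Import reals.
From mathcomp Require Import ring lra zify.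
Import Order.TTheory GRing.Theory Num.Theory.
Local Open Scope ring_scope.
Set Implicit Arguments. Unset Strict Implicit. Unset Printing Implicit Defensive.

Lemma cards1I (T : finType) (u : T) (A : {set T}) : #|[set u] :&: A| = (u \in A : nat).
Proof.
have [uA|uA] := boolP (u \in A); first by rewrite (setIidPl _) ?sub1set ?cards1.
suff -> : [set u] :&: A = set0 by rewrite cards0.
by apply/setP => w; rewrite !inE; case: eqP => // ->; apply/negbTE.
Qed.

Lemma cards2I (T : finType) (u v : T) (A : {set T}) :
  u != v -> #|[set u; v] :&: A| = ((u \in A) + (v \in A))%N.
Proof.
move=> uv; rewrite setIUl cardsU !cards1I -setIIl.
suff -> : [set u] :&: [set v] = set0 by rewrite set0I cards0 subn0.
by apply/setP => w; rewrite !inE; case: eqP => // ->; apply/negbTE.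
Qed.

Section Cuts.
Variable n : nat.
Implicit Types (S : {set 'I_n}) (e : edge n).

Lemma edge_pair e : exists u v, u != v /\ val e = [set u; v].
Proof. exact/cards2P/(valP e). Qed.

Lemma card_edge e : #|val e| = 2%N.
Proof. exact/eqP/(valP e). Qed.

Lemma in_cut_pair S e u v :
  u != v -> val e = [set u; v] -> in_cut S e = (u \in S) (+) (v \in S).
Proof. by move=> uv ev; rewrite /in_cut ev cards2I //; case: (u \in S); case: (v \in S). Qed.

Lemma in_cut1 v e : in_cut [set v] e = (v \in val e).
Proof.
have [a [b [ab ev]]] := edge_pair e.
rewrite (in_cut_pair _ ab ev) ev !inE (eq_sym v a) (eq_sym v b).
case: (eqVneq a v) => [av|_]; last by case: (b == v).
by rewrite -av eq_sym (negbTE ab).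
Qed.

Lemma in_cutC S e : in_cut (~: S) e = in_cut S e.
Proof.
have [u [v [uv ev]]] := edge_pair e.
by rewrite !(in_cut_pair _ uv ev) !inE addbN addNb negbK.
Qed.

Lemma in_cut0 e : in_cut set0 e = false.
Proof. by rewrite /in_cut setI0 cards0. Qed.

Lemma cards2_eq2 (u v : 'I_n) : u != v -> #|[set u; v]| == 2%N.
Proof. by rewrite cards2 => ->. Qed.

Definition pair_edge u v (uv : u != v) : edge n := exist _ [set u; v] (cards2_eq2 uv).

Lemma card_edges_at (v : 'I_n) (A : {set edge n}) :
  (forall e, e \in A -> v \in val e) -> (#|A| <= n.-1)%N.
Proof.
move=> Av; have -> : n.-1 = #|[set~ v]| by rewrite cardsC1 card_ord.
have inj : {in A &, injective (fun e : edge n => val e :\ v)}.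
  move=> e1 e2 /Av v1 /Av v2 /= eq12.
  by apply/val_inj; rewrite -(setD1K v1) -(setD1K v2) eq12.
rewrite -(card_in_imset inj).
apply: leq_trans (leq_imset_card (fun w => [set w]) [set~ v]).
apply/subset_leq_card/subsetP => _ /imsetP[e /Av ve ->].
have /cards1P[w ew] : #|val e :\ v| == 1%N.
  by have := cardsD1 v (val e); rewrite ve card_edge => /eqP; rewrite add1n eqSS eq_sym.
have /setD1P[wv _] : w \in val e :\ v by rewrite ew set11.
by rewrite ew imset_f // !inE.
Qed.

End Cuts.

Section CutWeight.
Variables (R : comPzRingType) (n : nat).
Implicit Types (S T : {set 'I_n}) (e : edge n) (f : edge n -> R).

Definition cut_weight f S := \sum_(e | in_cut S e) f e.

Definition crosses S T e :=
  (#|val e :&: (S :\: T)| == 1%N) && (#|val e :&: (T :\: S)| == 1%N).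

Lemma cut_weight_modular f S T :
  cut_weight f S + cut_weight f T =
  cut_weight f (S :&: T) + cut_weight f (S :|: T) + 2 * \sum_(e | crosses S T e) f e.
Proof.
rewrite /cut_weight mulr_sumr !(big_mkcond (fun e => in_cut _ e)) (big_mkcond (crosses S T)).
rewrite -!big_split /=; apply: eq_bigr => e _.
have [u [v [uv ev]]] := edge_pair e.
rewrite /crosses !(in_cut_pair _ uv ev) ev !cards2I // !inE.
by case: (u \in S); case: (u \in T); case: (v \in S); case: (v \in T); rewrite /=; ring.
Qed.

Lemma cut_weightC f S : cut_weight f (~: S) = cut_weight f S.
Proof. by apply: eq_bigl => e; rewrite in_cutC. Qed.

Lemma cut_weight0 f : cut_weight f set0 = 0.
Proof. by rewrite /cut_weight big_pred0 // => e; rewrite in_cut0. Qed.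

Lemma cut_weightT f : cut_weight f setT = 0.
Proof. by rewrite -setC0 cut_weightC cut_weight0. Qed.

Lemma cut_weight1 f v : cut_weight f [set v] = \sum_(e : edge n | v \in val e) f e.
Proof. by apply: eq_bigl => e; rewrite in_cut1. Qed.

Lemma cut_weight_pair f u v (uv : u != v) :
  cut_weight f [set u] + cut_weight f [set v] =
  cut_weight f [set u; v] + 2 * f (pair_edge uv).
Proof.
have uIv : [set u] :&: [set v] = set0.
  by apply/setP => w; rewrite !inE; case: eqP => // ->; apply/negbTE.
have uDv : [set u] :\: [set v] = [set u].
  by apply/setP => w; rewrite !inE andbC; case: eqP => // ->.
have vDu : [set v] :\: [set u] = [set v].
  by apply/setP => w; rewrite !inE andbC; case: eqP => // ->; rewrite eq_sym.
rewrite cut_weight_modular uIv cut_weight0 add0r (big_pred1 (pair_edge uv)) // => e.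
rewrite /crosses uDv vDu ![val e :&: _]setIC !cards1I.
case: (boolP (u \in val e)) => ue; case: (boolP (v \in val e)) => ve //=; apply/esym/eqP.
- apply/val_inj/eqP; rewrite /= eq_sym eqEcard subUset !sub1set ue ve.
  by rewrite card_edge cards2 uv.
- by move=> eE; rewrite eE /= !inE eqxx orbT in ve.
- by move=> eE; rewrite eE /= !inE eqxx in ue.
- by move=> eE; rewrite eE /= !inE eqxx in ue.
Qed.

End CutWeight.

Section Laminar.
Variable T : finType.
Implicit Types (A B M S U W : {set T}) (L : {set {set T}}).

Definition noncrossing A B := [|| A \subset B, B \subset A | [disjoint A & B]].

Definition laminar L := [forall A in L, forall B in L, noncrossing A B].

Lemma laminarP L : reflect {in L &, forall A B, noncrossing A B} (laminar L).
Proof.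
apply: (iffP forall_inP) => [lamL A B AL BL|lamL A AL].
  exact: (forall_inP (lamL A AL)).
by apply/forall_inP => B BL; apply: lamL.
Qed.

Lemma noncrossingC A B : noncrossing A B = noncrossing B A.
Proof. by rewrite /noncrossing disjoint_sym orbCA. Qed.

Lemma noncrossingxx A : noncrossing A A.
Proof. by rewrite /noncrossing subxx. Qed.

Lemma noncrossingI W S U :
  noncrossing W S -> noncrossing W U -> noncrossing W (S :&: U).
Proof.
move=> hS hU; rewrite /noncrossing.
case/or3P: hS => [WS|SW|dWS]; first case/or3P: hU => [WU|UW|dWU].
- by rewrite subsetI WS WU.
- by rewrite subIset ?UW ?orbT.
- by rewrite (disjointWr (subsetIr S U) dWU) !orbT.
- by rewrite subIset ?SW ?orbT.
- by rewrite (disjointWr (subsetIl S U) dWS) !orbT.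
Qed.

Lemma noncrossingU W S U : ~~ [disjoint S & U] ->
  noncrossing W S -> noncrossing W U -> noncrossing W (S :|: U).
Proof.
move=> meetSU hS hU; rewrite /noncrossing.
case/or3P: hS => [WS|SW|dWS]; first by rewrite (subset_trans WS (subsetUl S U)).
all: case/or3P: hU => [WU|UW|dWU]; first by rewrite (subset_trans WU (subsetUr S U)).
- by rewrite subUset SW UW orbT.
- by rewrite (disjointWl SW dWU) in meetSU.
- by rewrite disjoint_sym (disjointWl UW dWS) in meetSU.
- by rewrite -setI_eq0 setIUr setU_eq0 !setI_eq0 dWS dWU !orbT.
Qed.

Lemma noncrossingD1 A B a : noncrossing A B -> noncrossing (A :\ a) (B :\ a).
Proof.
case/or3P => [AB|BA|dAB]; rewrite /noncrossing.
- by rewrite setSD.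
- by rewrite (setSD _ BA) orbT.
- by rewrite (disjointW (subsetDl A [set a]) (subsetDl B [set a]) dAB) !orbT.
Qed.

Lemma laminar_min_proper L M S : laminar L -> M \in L ->
  (forall S, S \in L -> #|M| <= #|S|)%N ->
  S \in L -> S != M -> ~~ [disjoint M & S] -> M \proper S.
Proof.
move=> /laminarP lamL ML Mmin SL SM meetMS.
case/or3P: (lamL _ _ ML SL) => [MS|SsM|dMS]; last by rewrite dMS in meetMS.
  by rewrite properEneq eq_sym SM.
by move: SM; rewrite eqEcard SsM Mmin.
Qed.

Lemma laminar_min_setD1_inj L M a : laminar L -> M \in L ->
  (forall S, S \in L -> #|M| <= #|S|)%N -> (1 < #|M|)%N -> a \in M ->
  {in L :\ M &, injective (fun S => S :\ a)}.
Proof.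
move=> lamL ML Mmin M2 aM.
have [b bM ba] : exists2 b, b \in M & b != a.
  have /set0Pn[b] : M :\ a != set0 by rewrite -card_gt0; move: M2; rewrite (cardsD1 a) aM.
  by rewrite !inE => /andP[ba bM]; exists b.
have grows S x : S \in L -> S != M -> x \in M -> x \in S -> M \proper S.
  move=> SL SM xM xS; apply: laminar_min_proper SL SM _ => //.
  by rewrite -setI_eq0; apply/set0Pn; exists x; rewrite inE xM xS.
have keeps_a S S' : S \in L :\ M -> S' \in L :\ M -> a \in S -> S :\ a = S' :\ a -> a \in S'.
  rewrite !inE => /andP[SM SL] /andP[S'M S'L] aS eqS.
  have /setD1P[_ bS'] : b \in S' :\ a.
    by rewrite -eqS !inE ba (subsetP (proper_sub (grows S a SL SM aM aS))).
  exact: (subsetP (proper_sub (grows S' b S'L S'M bM bS'))).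
move=> S S' SL S'L /= eqS; apply/setP => w.
case: (eqVneq w a) => [->|wa]; last by move/setP: eqS => /(_ w); rewrite !inE wa.
by apply/idP/idP => aX; [apply: keeps_a SL S'L aX eqS | apply: keeps_a S'L SL aX (esym eqS)].
Qed.

Lemma laminar_imsetD1 L a : laminar L -> laminar [set S :\ a | S in L].
Proof.
move=> /laminarP lamL; apply/laminarP => _ _ /imsetP[A AL ->] /imsetP[B BL ->].
exact/noncrossingD1/lamL.
Qed.

Lemma laminar_card U L : laminar L ->
  (forall S, S \in L -> S \subset U /\ (1 < #|S|)%N) -> (#|L| <= #|U|.-1)%N.
Proof.
have [m] := ubnP #|U|; elim: m U L => // m IH U L ltUm lamL sizeL.
have [->|[S0 S0L]] := set_0Vmem L; first by rewrite cards0.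
have [M [ML Mmin]] : exists M, M \in L /\ forall S, S \in L -> (#|M| <= #|S|)%N.
  by have [M ML Mmin] := arg_minnP (fun S : {set T} => #|S|) S0L; exists M.
have [MU M2] := sizeL M ML.
have /set0Pn[a aM] : M != set0 by rewrite -card_gt0 ltnW.
have injD1 := laminar_min_setD1_inj lamL ML Mmin M2 aM.
have lamL' : laminar [set S :\ a | S in L :\ M].
  apply: laminar_imsetD1; apply/laminarP => A B /setD1P[_ AL] /setD1P[_ BL].
  exact: (laminarP _ lamL).
have sizeL' S : S \in [set S :\ a | S in L :\ M] ->
    S \subset U :\ a /\ (1 < #|S|)%N.
  case/imsetP => S' /setD1P[S'M S'L] ->; have [S'U S'2] := sizeL S' S'L.
  split; first exact: setSD.
  have := cardsD1 a S'; case: (boolP (a \in S')) => aS' /=; last lia.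
  have /proper_card : M \proper S'.
    apply: laminar_min_proper S'L S'M _ => //.
    by rewrite -setI_eq0; apply/set0Pn; exists a; rewrite inE aM aS'.
  lia.
have aU : a \in U := subsetP MU a aM.
have ltUa : (#|U :\ a| < m)%N by move: ltUm; rewrite (cardsD1 a U) aU.
have : (#|L :\ M| <= #|U :\ a|.-1)%N.
  by rewrite -(card_in_imset injD1); apply: IH ltUa lamL' sizeL'.
have cardL : #|L| = #|L :\ M|.+1 by rewrite (cardsD1 M L) ML.
have := leq_trans M2 (subset_leq_card MU).
rewrite cardL (cardsD1 a U) aU /=; lia.
Qed.

Lemma exists_maximal_laminar (F : {set {set T}}) : exists L, [/\ L \subset F, laminar L &
  forall S, S \in F -> {in L, forall W, noncrossing W S} -> S \in L].
Proof.
have laminar0 : (set0 \subset F) && laminar set0.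
  by rewrite sub0set; apply/laminarP => A; rewrite inE.
have [L /andP[LF lamL] Lmax] :=
  @arg_maxnP _ set0 (fun L => (L \subset F) && laminar L) (fun L => #|L|) laminar0.
exists L; split => // S SF WS; apply/negPn/negP => SL.
have /Lmax : (S |: L \subset F) && laminar (S |: L).
  rewrite subUset sub1set SF LF; apply/laminarP => A B.
  rewrite !inE => /predU1P[->|AL] /predU1P[->|BL].
  - exact: noncrossingxx.
  - by rewrite noncrossingC WS.
  - exact: WS.
  - exact: (laminarP _ lamL).
by rewrite cardsU1 SL add1n /= ltnn.
Qed.

End Laminar.

Lemma exists_nontrivial_solution (F : fieldType) (I T : finType)
    (E : {set T}) (rows : {set I}) (a : I -> T -> F) :
  (#|rows| < #|E|)%N ->
  exists d : T -> F, [/\ exists e, d e != 0, forall e, e \notin E -> d e = 0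
     & forall i, i \in rows -> \sum_e a i e * d e = 0].
Proof.
move=> lt_rows_E.
pose A : 'M[F]_(#|E|, #|rows|) := \matrix_(j, i) a (enum_val i) (enum_val j).
have /rowV0Pn[w /sub_kermxP wA /rV0Pn[j0 wj0]] : kermx A != 0.
  rewrite -mxrank_eq0 mxrank_ker -lt0n subn_gt0.
  exact: leq_ltn_trans (rank_leq_col A) lt_rows_E.
exists (fun e => \sum_(j | enum_val j == e) w 0 j); split.
- exists (enum_val j0).
  rewrite (eq_bigl (pred1 j0)) ?big_pred1_eq // => j.
  by rewrite /= (inj_eq enum_val_inj).
- move=> e eE; rewrite big_pred0 // => j.
  by apply/negbTE; apply: contraNneq eE => <-; apply: enum_valP.
- move=> i iR.
  have := congr1 (fun M : 'M_(1, #|rows|) => M 0 (enum_rank_in iR i)) wA.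
  rewrite /= !mxE => wAi; apply: etrans wAi.
  under eq_bigr do rewrite mulr_sumr.
  rewrite (exchange_big_dep predT) //=; apply: eq_bigr => j _.
  rewrite (eq_bigl (pred1 (enum_val j))) => [|e]; last by rewrite /= eq_sym.
  by rewrite big_pred1_eq !mxE enum_rankK_in // mulrC.
Qed.

Lemma exists_pos_lower_bound (R : realFieldType) (I : finType) (P : pred I) (s : I -> R) :
  (forall i, P i -> 0 < s i) -> exists2 eps : R, 0 < eps & forall i, P i -> eps <= s i.
Proof.
move=> s_gt0; exists (\big[Order.min/1]_(i | P i) s i); last by move=> i; apply: bigmin_le_cond.
by apply: lt_bigmin => //; apply: ltr01.
Qed.

Section SupportDegree.
Variables (R : realType) (n : nat) (x : edge n -> R).

Lemma supp_deg_le v : (supp_deg x v <= n.-1)%N.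
Proof. by rewrite /supp_deg; apply: (@card_edges_at _ v) => e /setIdP[]. Qed.

Lemma sum_supp_deg : (\sum_(v < n) supp_deg x v = 2 * #|Defs.support x|)%N.
Proof.
under eq_bigr => v _ do rewrite /supp_deg -sum1_card big_mkcond /=.
rewrite exchange_big /= mulnC -sum_nat_const [RHS]big_mkcond; apply: eq_bigr => e _.
case: (boolP (e \in Defs.support x)) => eS.
  rewrite -[RHS](card_edge e) -sum1_card [RHS]big_mkcond.
  by apply: eq_bigr => v _; rewrite inE eS.
by rewrite big1 // => v _; rewrite inE (negbTE eS).
Qed.

End SupportDegree.

Section SubtourPolytope.
Variables (R : realType) (n : nat) (x : edge n -> R).
Hypothesis hx : in_SEP x.
Implicit Types (S T : {set 'I_n}) (e : edge n).

Lemma in_SEP_cut1 v : cut_weight x [set v] = 2.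
Proof. by case: hx => deg _ _; apply: deg. Qed.

Lemma in_SEP_ge0 e : 0 <= x e.
Proof. by case: hx => _ _ /(_ e)/andP[]. Qed.

Lemma in_SEP_le1 e : x e <= 1.
Proof. by case: hx => _ _ /(_ e)/andP[]. Qed.

Lemma in_SEP_cut_ge2 S : S != set0 -> S != setT -> 2 <= cut_weight x S.
Proof.
have small (A : {set 'I_n}) : (0 < #|A| <= 2)%N -> 2 <= cut_weight x A.
  case/andP => A_gt0 A_le2; have [/eqP/cards1P[v ->]|A_neq1] := eqVneq #|A| 1%N.
    by rewrite in_SEP_cut1.
  have /cards2P[u [v [uv ->]]] : #|A| == 2%N by lia.
  have := cut_weight_pair x uv; rewrite !in_SEP_cut1.
  have := in_SEP_le1 (pair_edge uv); lra.
move=> S0 ST; have := cardsC S; rewrite card_ord.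
have S_gt0 : (0 < #|S|)%N by rewrite card_gt0.
have S_lt_n : (#|S| < n)%N.
  by rewrite -[X in (_ < X)%N]card_ord -cardsT proper_card ?properT.
case: (leqP #|S| 2) => [S_le2 _|S_gt2 cardSC]; first by apply: small; rewrite S_gt0.
case: (leqP #|S| (n - 3)) => [S_le|S_gt]; first by case: hx => _ cutc _; apply: cutc.
by rewrite -cut_weightC; apply: small; apply/andP; split; lia.
Qed.

Lemma supp_deg_ge2 v : (2 <= supp_deg x v)%N.
Proof.
have sum2 : \sum_(e in [set e in Defs.support x | v \in val e]) x e = 2.
  rewrite -(in_SEP_cut1 v) cut_weight1 [RHS](bigID (fun e => 0 < x e)) /=.
  rewrite [X in _ = _ + X]big1 ?addr0 => [|e /andP[_ xe]]; last first.
    by apply/eqP; rewrite eq_le in_SEP_ge0 andbT leNgt.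
  by apply: eq_bigl => e; rewrite !inE andbC.
have : 2 <= (supp_deg x v)%:R :> R.
  by rewrite -sum2 /supp_deg -sum1_card natr_sum; apply: ler_sum => e _; apply: in_SEP_le1.
by rewrite (ler_nat R 2).
Qed.

Lemma tight_neq0 S : cut_weight x S = 2 -> S != set0.
Proof. by move=> cS; apply/eqP => S0; move: cS; rewrite S0 cut_weight0; lra. Qed.

Lemma tight_neqT S : cut_weight x S = 2 -> S != setT.
Proof. by move=> cS; apply/eqP => ST; move: cS; rewrite ST cut_weightT; lra. Qed.

Lemma tight_uncross S T :
  cut_weight x S = 2 -> cut_weight x T = 2 -> S :&: T != set0 -> S :|: T != setT ->
  [/\ cut_weight x (S :&: T) = 2, cut_weight x (S :|: T) = 2 &
      forall d : edge n -> R, (forall e, e \notin Defs.support x -> d e = 0) ->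
      cut_weight d S + cut_weight d T = cut_weight d (S :&: T) + cut_weight d (S :|: T)].
Proof.
move=> cS cT I_neq0 U_neqT.
have I_neqT : S :&: T != setT.
  by apply: contraNneq (tight_neqT cS) => IT; rewrite -subTset -IT subsetIl.
have U_neq0 : S :|: T != set0.
  by apply: contraNneq (tight_neq0 cS) => /eqP; rewrite setU_eq0 => /andP[].
have B_ge0 : 0 <= \sum_(e | crosses S T e) x e by apply: sumr_ge0 => e _; apply: in_SEP_ge0.
have := cut_weight_modular x S T; rewrite cS cT.
have := in_SEP_cut_ge2 I_neq0 I_neqT; have := in_SEP_cut_ge2 U_neq0 U_neqT.
move=> cU cI modx; have [cI2 cU2 B_eq0] : [/\ cut_weight x (S :&: T) = 2,
  cut_weight x (S :|: T) = 2 & \sum_(e | crosses S T e) x e = 0] by split; lra.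
split => // d d0.
have x0 : forall e, crosses S T e -> x e = 0.
  by apply/psumr_eq0P; [move=> e _; apply: in_SEP_ge0 | rewrite B_eq0].
rewrite cut_weight_modular big1 ?mulr0 ?addr0 // => e ce.
by apply: d0; rewrite inE x0 // ltxx.
Qed.

Section Direction.
Variable d : edge n -> R.
Hypothesis d_supp : forall e, e \notin Defs.support x -> d e = 0.
Hypothesis d_tight : forall S, cut_weight x S = 2 -> cut_weight d S = 0.

Lemma tight_direction_one e : x e = 1 -> d e = 0.
Proof.
have [u [v [uv ev]]] := edge_pair e.
have -> : e = pair_edge uv by apply: val_inj.
move=> xe1; have := cut_weight_pair x uv; rewrite !in_SEP_cut1 xe1 => cx.
have tight_uv : cut_weight x [set u; v] = 2 by lra.
have := cut_weight_pair d uv.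
by rewrite (d_tight (in_SEP_cut1 u)) (d_tight (in_SEP_cut1 v)) (d_tight tight_uv); lra.
Qed.

Lemma in_SEP_perturb :
  exists2 eps : R, 0 < eps & forall t, `|t| <= eps -> in_SEP (fun e => x e + t * d e).
Proof.
have [mu1 mu1_gt0 mu1_le] : exists2 mu1 : R, 0 < mu1 &
    forall e, 0 < x e < 1 -> mu1 <= Num.min (x e) (1 - x e).
  by apply: exists_pos_lower_bound => e /andP[? ?]; rewrite lt_min subr_gt0; apply/andP.
have [mu2 mu2_gt0 mu2_le] : exists2 mu2 : R, 0 < mu2 &
    forall S, 2 < cut_weight x S -> mu2 <= cut_weight x S - 2.
  by apply: exists_pos_lower_bound => S; rewrite subr_gt0.
pose mu := Num.min mu1 mu2; pose M := 1 + \sum_e `|d e|.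
have sum_ge0 (P : pred (edge n)) : 0 <= \sum_(e | P e) `|d e|.
  by apply: sumr_ge0 => e _; apply: normr_ge0.
have M_gt0 : 0 < M by have := sum_ge0 xpredT; rewrite /M; lra.
have d_le e : `|d e| <= M.
  by rewrite /M (bigD1 e) //=; have := sum_ge0 (fun i => i != e); lra.
have cut_le S : `|cut_weight d S| <= M.
  apply: le_trans (ler_norm_sum _ _ _) _.
  rewrite /M [X in _ <= 1 + X](bigID (in_cut S)) /=.
  by have := sum_ge0 (fun e => ~~ in_cut S e); lra.
exists (mu / M); first by rewrite divr_gt0 // lt_min mu1_gt0.
move=> t t_le.
have td_le a : `|a| <= M -> - mu <= t * a <= mu.
  move=> a_le; rewrite -ler_norml normrM -(divfK (lt0r_neq0 M_gt0) mu).
  by apply: ler_pM => //; apply: normr_ge0.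
have mu_le1 : mu <= mu1 by rewrite ge_min lexx.
have mu_le2 : mu <= mu2 by rewrite ge_min lexx orbT.
split.
- move=> v; rewrite big_split /= -mulr_sumr.
  rewrite -/(cut_weight x _) -/(cut_weight d _) in_SEP_cut1.
  by rewrite (d_tight (in_SEP_cut1 v)) mulr0 addr0.
- move=> S S_ge3 S_le; rewrite big_split /= -mulr_sumr -/(cut_weight x _) -/(cut_weight d _).
  have [cS|cS] := eqVneq (cut_weight x S) 2; first by rewrite cS d_tight // mulr0 addr0.
  have cS_gt2 : 2 < cut_weight x S.
    by rewrite lt_neqAle eq_sym cS; case: hx => _ cutc _; apply: cutc.
  have := mu2_le S cS_gt2; have /andP := td_le _ (cut_le S); lra.
- move=> e; have [de0|de] := eqVneq (d e) 0.
    by rewrite de0 mulr0 addr0 in_SEP_ge0 in_SEP_le1.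
  have x_gt0 : 0 < x e by apply: contraNT de => xe; rewrite d_supp // inE.
  have x_lt1 : x e < 1.
    by rewrite lt_neqAle in_SEP_le1 andbT; apply: contra de => /eqP/tight_direction_one ->.
  have : mu1 <= Num.min (x e) (1 - x e) by apply: mu1_le; rewrite x_gt0.
  by rewrite le_min => /andP[]; have /andP := td_le _ (d_le e); lra.
Qed.

End Direction.

End SubtourPolytope.

Lemma SEP_vertex_rigid (R : realType) n (x d : edge n -> R) : SEP_vertex x ->
  (forall e, e \notin Defs.support x -> d e = 0) ->
  (forall S, cut_weight x S = 2 -> cut_weight d S = 0) -> forall e, d e = 0.
Proof.
move=> [hx extreme] d_supp d_tight e.
have [eps eps_gt0 perturb] := in_SEP_perturb hx d_supp d_tight.
have eps_le : `|eps| <= eps by rewrite ger0_norm // ltW.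
have eps_le' : `|- eps| <= eps by rewrite normrN.
have midpoint e' : x e' = 1 / 2 * (x e' + eps * d e') + (1 - 1 / 2) * (x e' + - eps * d e').
  by rewrite mulNr; lra.
have half_gt0 : 0 < 1 / 2 :> R by lra.
have half_lt1 : 1 / 2 < 1 :> R by lra.
have := extreme _ _ _ (perturb _ eps_le) (perturb _ eps_le') half_gt0 half_lt1 midpoint.
move=> /(congr1 (fun f => f e)) /=; rewrite mulNr => same.
have /eqP : eps * d e = 0 by lra.
by rewrite mulf_eq0 gt_eqF //= => /eqP.
Qed.

Section Uncrossing.
Variables (R : realType) (n : nat) (x : edge n -> R) (r : 'I_n).
Hypothesis hx : in_SEP x.
Implicit Types (A S T W : {set 'I_n}).

Definition tight_family : {set {set 'I_n}} :=
  [set S : {set 'I_n} | [&& r \notin S, (1 < #|S| < n.-1)%N & cut_weight x S == 2]].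

Lemma tight_familyP S : reflect
  [/\ r \notin S, (1 < #|S| < n.-1)%N & cut_weight x S = 2] (S \in tight_family).
Proof. by rewrite inE; apply: (iffP and3P) => -[-> -> /eqP]. Qed.

Lemma sub_setC1 A : r \notin A -> A \subset [set~ r].
Proof. by move=> rA; apply/subsetP => w wA; rewrite !inE; apply: contraNneq rA => <-. Qed.

Lemma card_setC1 : #|[set~ r]| = n.-1.
Proof. by rewrite cardsC1 card_ord. Qed.

Variable L : {set {set 'I_n}}.
Hypotheses (LF : L \subset tight_family) (lamL : laminar L)
  (Lmax : forall S, S \in tight_family -> {in L, forall W, noncrossing W S} -> S \in L).

Lemma card_tight_laminar : (#|L| <= n - 3)%N.
Proof.
have [->|[S SL]] := set_0Vmem L; first by rewrite cards0.
have /tight_familyP[_ /andP[S_gt1 S_lt] _] := subsetP LF S SL.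
have notinL : [set~ r] \notin L.
  by apply/negP => /(subsetP LF)/tight_familyP[_ /andP[_]]; rewrite card_setC1 ltnn.
suff : (#|[set~ r] |: L| <= #|[set~ r]|.-1)%N.
  have -> : #|[set~ r] |: L| = #|L|.+1 by rewrite cardsU1 notinL.
  by rewrite card_setC1; lia.
apply: laminar_card.
  apply/laminarP => A B; rewrite !inE => /predU1P[->|AL] /predU1P[->|BL].
  - exact: noncrossingxx.
  - by have /tight_familyP[rB _ _] := subsetP LF B BL; rewrite /noncrossing sub_setC1 ?orbT.
  - by have /tight_familyP[rA _ _] := subsetP LF A AL; rewrite /noncrossing sub_setC1.
  - exact: (laminarP _ lamL).
move=> A; rewrite !inE => /predU1P[->|AL]; first by rewrite subxx card_setC1; split=> //; lia.
by have /tight_familyP[rA /andP[A_gt1 _] _] := subsetP LF A AL; rewrite sub_setC1.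
Qed.

Variable d : edge n -> R.
Hypotheses (d_supp : forall e, e \notin Defs.support x -> d e = 0)
  (d_deg : forall v, cut_weight d [set v] = 0) (d_L : forall S, S \in L -> cut_weight d S = 0).

Lemma cut_dir_tight_notin A : cut_weight x A = 2 -> r \notin A ->
  (A \in tight_family -> cut_weight d A = 0) -> cut_weight d A = 0.
Proof.
move=> cA rA dF.
have A_gt0 : (0 < #|A|)%N by rewrite card_gt0 (tight_neq0 cA).
have A_sub := sub_setC1 rA; have := subset_leq_card A_sub.
rewrite card_setC1 => A_le.
have [/eqP/cards1P[v ->]|A_neq1] := eqVneq #|A| 1%N; first exact: d_deg.
have [A_eq|A_neq] := eqVneq #|A| n.-1.
  have -> : A = [set~ r] by apply/eqP; rewrite eqEcard A_sub A_eq; apply/eq_leq/card_setC1.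
  by rewrite cut_weightC d_deg.
by apply/dF/tight_familyP; split => //; apply/andP; split; lia.
Qed.

Lemma cut_dir_tight_family S : S \in tight_family -> cut_weight d S = 0.
Proof.
pose crossing A := [set W in L | ~~ noncrossing W A].
have [m] := ubnP #|crossing S|; elim: m S => // m IH S lt_m SF.
have [cross0|[T]] := set_0Vmem (crossing S).
  apply/d_L/Lmax => // W WL; apply/negPn/negP => nWS.
  by move/setP: cross0 => /(_ W); rewrite !inE WL nWS.
rewrite inE => /andP[TL nTS].
have /tight_familyP[rS _ cS] := SF; have /tight_familyP[rT _ cT] := subsetP LF T TL.
have meet : ~~ [disjoint S & T].
  by apply: contra nTS => dST; rewrite /noncrossing disjoint_sym dST !orbT.
have I_neq0 : S :&: T != set0 by rewrite setI_eq0.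
have U_neqT : S :|: T != setT.
  by apply/eqP => UT; have := in_setT r; rewrite -UT inE (negbTE rS) (negbTE rT).
have [cI cU dmod] := tight_uncross hx cS cT I_neq0 U_neqT.
have fewer A : (forall W, noncrossing W S -> noncrossing W T -> noncrossing W A) ->
    noncrossing T A -> (#|crossing A| < m)%N.
  move=> keep TA; apply: (@leq_trans #|crossing S|); last by rewrite -ltnS.
  apply/proper_card/properP; split.
    apply/subsetP => W; rewrite !inE => /andP[WL nWA]; rewrite WL.
    by apply: contra nWA => WS; apply: keep WS _; apply: (laminarP _ lamL).
  by exists T; rewrite !inE TL ?nTS ?TA.
have dI : cut_weight d (S :&: T) = 0.
  have rI : r \notin S :&: T by rewrite inE (negbTE rS).
  have TI : noncrossing T (S :&: T) by rewrite /noncrossing subsetIr orbT.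
  exact: cut_dir_tight_notin cI rI
    (fun IF => IH _ (fewer _ (fun W => @noncrossingI _ W S T) TI) IF).
have dU : cut_weight d (S :|: T) = 0.
  have rU : r \notin S :|: T by rewrite inE (negbTE rS) (negbTE rT).
  have TU : noncrossing T (S :|: T) by rewrite /noncrossing subsetUr.
  exact: cut_dir_tight_notin cU rU
    (fun UF => IH _ (fewer _ (fun W => @noncrossingU _ W S T meet) TU) UF).
by have := dmod d d_supp; rewrite (d_L TL) dI dU; lra.
Qed.

Lemma cut_dir_tight S : cut_weight x S = 2 -> cut_weight d S = 0.
Proof.
wlog rS : S / r \notin S => [hw cS|cS].
  have [rS|rS] := boolP (r \in S); last exact: hw.
  by rewrite -cut_weightC; apply: hw; rewrite ?inE ?negbK ?cut_weightC.
by apply: cut_dir_tight_notin cS rS _; apply: cut_dir_tight_family.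
Qed.

End Uncrossing.

Lemma SEP_vertex_support_card (R : realType) n (x : edge n -> R) :
  (2 < n)%N -> SEP_vertex x -> (#|Defs.support x| <= 2 * n - 3)%N.
Proof.
move=> n_gt2 hv; have hx := hv.1.
pose r : 'I_n := Ordinal (ltnW (ltnW n_gt2)).
have [L [LF lamL Lmax]] := exists_maximal_laminar (tight_family x r).
rewrite leqNgt; apply/negP => supp_gt.
pose rows := [set [set v] | v in 'I_n] :|: L.
have rows_lt : (#|rows| < #|Defs.support x|)%N.
  apply: leq_ltn_trans (leq_card_setU _ _) _.
  apply: leq_ltn_trans (leq_add (leq_imset_card _ _) (card_tight_laminar LF lamL)) _.
  by rewrite card_ord; lia.
have [d [[e0 de0] d_supp d_rows]] :=
  exists_nontrivial_solution (fun S e => (in_cut S e)%:R : R) rows_lt.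
have d_cut S : S \in rows -> cut_weight d S = 0.
  move=> /d_rows <-; rewrite /cut_weight big_mkcond; apply: eq_bigr => e _.
  by case: in_cut; rewrite ?mul1r ?mul0r.
have d_deg v : cut_weight d [set v] = 0 by apply/d_cut/setUP; left; apply: imset_f.
have d_L S : S \in L -> cut_weight d S = 0 by move=> SL; apply/d_cut/setUP; right.
have d_tight := cut_dir_tight hx LF lamL Lmax d_supp d_deg d_L.
by move: de0; rewrite (SEP_vertex_rigid hv d_supp d_tight) eqxx.
Qed.

Theorem mainTheorem3 (R : realType) (k : int) (n : nat) (x : edge n -> R) :
  in_A k x -> (k + 3 <= n%:Z) /\ (n%:Z <= 2 * k).
Proof.
move=> [[hv frac card_supp] no_deg2].
have deg3 v : (3 <= supp_deg x v)%N.
  by rewrite ltn_neqAle eq_sym no_deg2 (supp_deg_ge2 hv.1).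
have [e _|no_edge] := pickP (@predT (edge n)); last by case: frac => e; have := no_edge e.
have [u [_ [_ _]]] := edge_pair e.
have n_gt3 : (3 < n)%N by have := supp_deg_le x u; have := deg3 u; lia.
have supp_le := SEP_vertex_support_card (ltnW n_gt3) hv.
have : (\sum_(v < n) 3 <= \sum_(v < n) supp_deg x v)%N by apply: leq_sum => v _; apply: deg3.
rewrite sum_supp_deg sum_nat_const card_ord => supp_ge.
by split; lia.
Qed.
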